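(* Let $\mathbf{C}$ be the Cantor set with a fixed compatible metric $\mathrm{dist}$, let $X \subset \mathbf{C}$, and let $f : X \to Y$ be a continuous clopen-LC function from $X$ onto $Y \subset \mathbf{C}$ such that $f^{-1}(y)$ is compact for every $y \in Y$. For $n = 1,2,\dots$, let $X_n$ be the union of all fibers $f^{-1}(y)$, $y \in Y$, for which there exist a sequence $y_k \to y$ in $Y$ with $y_k \neq y$ for all $k$ and $y_k \neq y_j$ for $k\ne j$, points $x_k \in f^{-1}(y_k)$, and a point $\tilde{x}_y \in \mathbf{C}$ with $x_k \to \tilde{x}_y$ and $\mathrm{dist}(\tilde{x}_y, f^{-1}(y)) > 1/n$; let $Y_n = f(X_n)$. Then for every $n \ge 1$ the restriction $g_n = f|_{f^{-1}(\mathrm{cl}_Y Y_n)} : f^{-1}(\mathrm{cl}_Y Y_n) \to \mathrm{cl}_Y Y_n$ is an open function.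
   Context: A subset of a topological space is an LC-set if it is the intersection of an open set and a closed set. A function is open if it maps open sets to open sets of its image space. A function $f : X \to Y$ is clopen-LC if for every subset $U \subset X$ that is clopen in $X$, the image $f(U)$ is an LC-set in $Y$. $\mathrm{cl}_Y$ denotes closure in $Y$. *)

(* the Cantor set is modelled as the product space nat -> bool
   (2^omega with the product topology); the metric is an arbitrary compatible one. *)
From Stdlib Require Import Reals List.
Open Scope R_scope.

Definition Cantor := nat -> bool.
Definition cset := Cantor -> Prop.

Definition agree (n : nat) (x y : Cantor) : Prop :=
  forall i, (i < n)%nat -> x i = y i.
Definition is_open (U : cset) : Prop :=
  forall x, U x -> exists n, forall y, agree n x y -> U y.
Definition is_closed (F : cset) : Prop := is_open (fun x => ~ F x).

Definition rel_open (S U : cset) : Prop :=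
  (forall x, U x -> S x) /\
  exists V, is_open V /\ forall x, U x <-> (S x /\ V x).
Definition rel_closed (S F : cset) : Prop :=
  (forall x, F x -> S x) /\
  exists G, is_closed G /\ forall x, F x <-> (S x /\ G x).

Definition LC_in (Y A : cset) : Prop :=
  exists O F, rel_open Y O /\ rel_closed Y F /\ forall y, A y <-> (O y /\ F y).

Definition image (f : Cantor -> Cantor) (A : cset) : cset :=
  fun y => exists x, A x /\ f x = y.
Definition preimage_in (X : cset) (f : Cantor -> Cantor) (B : cset) : cset :=
  fun x => X x /\ B (f x).
Definition fiber (X : cset) (f : Cantor -> Cantor) (y : Cantor) : cset :=
  fun x => X x /\ f x = y.

Definition continuous_on (X : cset) (f : Cantor -> Cantor) : Prop :=
  forall V, is_open V -> rel_open X (preimage_in X f V).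

Definition clopen_LC (X Y : cset) (f : Cantor -> Cantor) : Prop :=
  forall U, rel_open X U -> rel_closed X U -> LC_in Y (image f U).

Definition cantor_compact (K : cset) : Prop :=
  forall Ucal : cset -> Prop,
    (forall U, Ucal U -> is_open U) ->
    (forall x, K x -> exists U, Ucal U /\ U x) ->
    exists l : list cset, (forall U, In U l -> Ucal U) /\
      (forall x, K x -> exists U, In U l /\ U x).

Definition converges (s : nat -> Cantor) (l : Cantor) : Prop :=
  forall U, is_open U -> U l -> exists N, forall k, (N <= k)%nat -> U (s k).

Definition closure (A : cset) : cset :=
  fun x => forall U, is_open U -> U x -> exists a, U a /\ A a.

Definition clY (Y A : cset) : cset := fun y => Y y /\ closure A y.

Definition is_metric (d : Cantor -> Cantor -> R) : Prop :=
  (forall x y, 0 <= d x y) /\ (forall x y, d x y = 0 <-> x = y) /\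
  (forall x y, d x y = d y x) /\ (forall x y z, d x z <= d x y + d y z).
Definition metric_open (d : Cantor -> Cantor -> R) (U : cset) : Prop :=
  forall x, U x -> exists e, 0 < e /\ forall y, d x y < e -> U y.
Definition compatible (d : Cantor -> Cantor -> R) : Prop :=
  is_metric d /\ forall U, is_open U <-> metric_open d U.

Definition dist_set_gt (d : Cantor -> Cantor -> R) (p : Cantor) (A : cset) (r : R) : Prop :=
  exists s, r < s /\ forall a, A a -> s <= d p a.

Definition Xn (d : Cantor -> Cantor -> R) (X Y : cset) (f : Cantor -> Cantor) (n : nat) : cset :=
  fun x => exists y, Y y /\ fiber X f y x /\
    exists (ys xs : nat -> Cantor) (xt : Cantor),
      (forall k, Y (ys k)) /\ converges ys y /\
      (forall k, ys k <> y) /\ (forall k j, k <> j -> ys k <> ys j) /\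
      (forall k, fiber X f (ys k) (xs k)) /\
      converges xs xt /\ dist_set_gt d xt (fiber X f y) (/ INR n).

Definition Yn d X Y f n : cset := image f (Xn d X Y f n).

Definition open_map_on (D E : cset) (f : Cantor -> Cantor) : Prop :=
  forall U, rel_open D U -> rel_open E (image f U).

From Stdlib Require Import Reals List Lra Lia Classical ClassicalEpsilon.
Open Scope R_scope.

(* Put E = cl_Y(Y_n) and let y = f x with x in a relatively open
   U of f^{-1}(E); U contains the trace on X of a cylinder V around x.  It is
   enough to show that every point of E close enough to y lies in f(X /\ V).
   If not, then since f(X /\ V) is an LC-set (hence locally closed around y),
   points q_L of Y_n itself, converging to y, escape f(X /\ V).  Each q_L comes
   with a point xt_L, a limit of points of fibres over a sequence converging
   to q_L, at distance > 1/n from the fibre over q_L.  By compactness of 2^omega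
   the xt_L cluster at some z.  Taking a cylinder C around z of diameter < 1/n,
   the set f(X /\ (V \/ C)) is again LC, so it contains those q_L that are near
   y and whose xt_L lies in C (they are limits of images of points of C).  A
   preimage of such q_L in V contradicts the escape, one in C is within 1/n of
   xt_L, a contradiction. *)

Lemma agree_refl L x : agree L x x.
Proof. intros i _; reflexivity. Qed.

Lemma agree_sym L x y : agree L x y -> agree L y x.
Proof. intros H i Hi; symmetry; auto. Qed.

Lemma agree_trans L x y z : agree L x y -> agree L y z -> agree L x z.
Proof. intros H1 H2 i Hi; rewrite H1; auto. Qed.

Lemma agree_le m L x y : (m <= L)%nat -> agree L x y -> agree m x y.
Proof. intros Hm H i Hi; apply H; lia. Qed.

Definition clopen (P : cset) : Prop := is_open P /\ is_closed P.

Lemma cylinder_clopen L z : clopen (agree L z).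
Proof.
  split.
  - intros x Hx; exists L; intros y Hy; exact (agree_trans _ _ _ _ Hx Hy).
  - intros x Hx; exists L; intros y Hy Hz.
    exact (Hx (agree_trans _ _ _ _ Hz (agree_sym _ _ _ Hy))).
Qed.

Lemma clopen_union P Q : clopen P -> clopen Q -> clopen (fun w => P w \/ Q w).
Proof.
  intros [HPo HPc] [HQo HQc]; split.
  - intros x [Px | Qx].
    + destruct (HPo x Px) as [a Ha]; exists a; intros y Hy; left; auto.
    + destruct (HQo x Qx) as [a Ha]; exists a; intros y Hy; right; auto.
  - intros x Hx.
    destruct (HPc x (fun Px => Hx (or_introl Px))) as [a Ha].
    destruct (HQc x (fun Qx => Hx (or_intror Qx))) as [b Hb].
    exists (Nat.max a b); intros y Hy [Py | Qy].
    + apply (Ha y); [apply (agree_le _ (Nat.max a b)); [lia | exact Hy] | exact Py].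
    + apply (Hb y); [apply (agree_le _ (Nat.max a b)); [lia | exact Hy] | exact Qy].
Qed.

(* The trace on X of a clopen set is clopen in X, so a clopen-LC map sends it
   to an LC-set. *)
Lemma clopen_image_LC X Y f P :
  clopen_LC X Y f -> clopen P -> LC_in Y (image f (fun w => X w /\ P w)).
Proof.
  intros Hclp [HPo HPc]; apply Hclp.
  - split; [intros w Hw; exact (proj1 Hw) | exists P; split; [exact HPo | intros w; tauto]].
  - split; [intros w Hw; exact (proj1 Hw) | exists P; split; [exact HPc | intros w; tauto]].
Qed.

Lemma LC_locally_closed Y A y : LC_in Y A -> A y ->
  exists L, forall e, Y e -> agree L y e -> ~ A e ->
    exists M, forall q, agree M e q -> ~ A q.
Proof.
  intros [O [F [[_ [G [HG HGe]]] [[_ [H [HH HHe]]] HA]]]] Ay.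
  destruct (proj1 (HA y) Ay) as [Oy _].
  destruct (HG y (proj2 (proj1 (HGe y) Oy))) as [L HL].
  exists L; intros e Ye Hye nAe.
  assert (nHe : ~ H e).
  { intro He; apply nAe, HA; split; [apply HGe | apply HHe]; auto. }
  destruct (HH e nHe) as [M HM].
  exists M; intros q Heq Aq.
  destruct (proj1 (HA q) Aq) as [_ Fq].
  exact (HM q Heq (proj2 (proj1 (HHe q) Fq))).
Qed.

Lemma converges_agree s l L :
  converges s l -> exists N, forall k, (N <= k)%nat -> agree L l (s k).
Proof. intro Hs; apply Hs; [apply cylinder_clopen | apply agree_refl]. Qed.

Lemma LC_limit_closed Y A y : LC_in Y A -> A y ->
  exists L, forall e s, Y e -> agree L y e -> converges s e ->
    (exists N, forall k, (N <= k)%nat -> A (s k)) -> A e.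
Proof.
  intros HA Ay; destruct (LC_locally_closed Y A y HA Ay) as [L HL].
  exists L; intros e s Ye Hye Hs [N HN].
  apply NNPP; intro nAe.
  destruct (HL e Ye Hye nAe) as [M HM].
  destruct (converges_agree s e M Hs) as [N' HN'].
  apply (HM (s (Nat.max N N'))); [apply HN' | apply HN]; lia.
Qed.

Lemma escape_into_subset Y A B y : LC_in Y A -> A y ->
  (forall L, exists e, clY Y B e /\ agree L y e /\ ~ A e) ->
  forall L, exists q, B q /\ agree L y q /\ ~ A q.
Proof.
  intros HA Ay Hesc L.
  destruct (LC_locally_closed Y A y HA Ay) as [L0 HL0].
  destruct (Hesc (Nat.max L L0)) as [e [[Ye Hcle] [Hye nAe]]].
  destruct (HL0 e Ye (agree_le _ _ _ _ (Nat.le_max_r _ _) Hye) nAe) as [M HM].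
  set (K := Nat.max M (Nat.max L L0)).
  destruct (Hcle (agree K e) (proj1 (cylinder_clopen K e)) (agree_refl _ _))
    as [q [Heq Bq]].
  exists q; split; [exact Bq | split].
  - apply (agree_trans _ _ e).
    + apply (agree_le _ (Nat.max L L0)); [lia | exact Hye].
    + apply (agree_le _ K); [unfold K; lia | exact Heq].
  - apply HM, (agree_le _ K); [unfold K; lia | exact Heq].
Qed.

Lemma rel_open_of_local S A : (forall y, A y -> S y) ->
  (forall y, A y -> exists L, forall y', S y' -> agree L y y' -> A y') ->
  rel_open S A.
Proof.
  intros HAS Hloc; split; [exact HAS |].
  exists (fun y => exists L, forall y', S y' -> agree L y y' -> A y'); split.
  - intros y [L HL]; exists L; intros y2 Hy2; exists L; intros y' Sy' Hy'.
    exact (HL y' Sy' (agree_trans _ _ _ _ Hy2 Hy')).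
  - intros y; split.
    + intros Ay; split; [auto | apply Hloc; exact Ay].
    + intros [Sy [L HL]]; exact (HL y Sy (agree_refl _ _)).
Qed.

(* Sequential compactness of 2^omega (Koenig's lemma): every sequence has a
   cluster point z, i.e. it comes back infinitely often into each cylinder
   around z.  z is built bit by bit, keeping this property for finite L. *)
Definition frequently_near (p : nat -> Cantor) (L : nat) (z : Cantor) : Prop :=
  forall N, exists m, (N <= m)%nat /\ agree L z (p m).

Definition set_bit (z : Cantor) (L : nat) (b : bool) : Cantor :=
  fun i => if Nat.eqb i L then b else z i.

Fixpoint cluster_approx (p : nat -> Cantor) (L : nat) : Cantor :=
  match L with
  | O => p O
  | S L' =>
      let z := cluster_approx p L' in
      if excluded_middle_informative (frequently_near p (S L') (set_bit z L' true))
      then set_bit z L' true else set_bit z L' false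
  end.

Lemma agree_set_bit L z w b : agree L z w -> w L = b -> agree (S L) (set_bit z L b) w.
Proof.
  intros H Hb i Hi; unfold set_bit.
  destruct (Nat.eqb_spec i L); [subst; auto | apply H; lia].
Qed.

Lemma cluster_approx_near p L : frequently_near p L (cluster_approx p L).
Proof.
  induction L as [| L IHL]; simpl.
  - intros N; exists N; split; [lia | intros i Hi; lia].
  - destruct (excluded_middle_informative _) as [Htrue | Htrue]; [exact Htrue |].
    apply not_all_ex_not in Htrue; destruct Htrue as [N0 HN0].
    intros N; destruct (IHL (Nat.max N N0)) as [m [Hm Ha]].
    exists m; split; [lia |].
    apply agree_set_bit; [exact Ha |].
    destruct (p m L) eqn:E; [| reflexivity].
    exfalso; apply HN0; exists m; split; [lia | apply agree_set_bit; auto].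
Qed.

Lemma cluster_approx_stable p i L : (i < L)%nat -> cluster_approx p L i = cluster_approx p (S i) i.
Proof.
  induction L as [| L IHL]; intros Hi; [lia |].
  destruct (Nat.eq_dec i L) as [-> | Hne]; [reflexivity |].
  rewrite <- IHL by lia; simpl.
  destruct (excluded_middle_informative _); unfold set_bit;
    destruct (Nat.eqb_spec i L); try lia; reflexivity.
Qed.

Lemma cantor_cluster_point (p : nat -> Cantor) : exists z, forall L, frequently_near p L z.
Proof.
  exists (fun i => cluster_approx p (S i) i); intros L N.
  destruct (cluster_approx_near p L N) as [m [Hm Ha]].
  exists m; split; [exact Hm |].
  intros i Hi; rewrite <- (Ha i Hi); symmetry; apply cluster_approx_stable; exact Hi.
Qed.

Lemma ball_contains_cylinder d z r : compatible d -> 0 < r ->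
  exists L, forall w, agree L z w -> d z w < r.
Proof.
  intros [[_ [Hdeq [_ Hdtri]]] Hcomp] Hr.
  assert (Hball : is_open (fun w => d z w < r)).
  { apply Hcomp; intros w Hw; exists (r - d z w); split; [lra |].
    intros v Hv; pose proof (Hdtri z w v); lra. }
  apply Hball; rewrite (proj2 (Hdeq z z) eq_refl); exact Hr.
Qed.

Definition Yn_witness d X Y f n (q xt : Cantor) : Prop :=
  exists ys xs, (forall k, Y (ys k)) /\ converges ys q /\
    (forall k, fiber X f (ys k) (xs k)) /\ converges xs xt /\
    dist_set_gt d xt (fiber X f q) (/ INR n).

Lemma Yn_witness_of d X Y f n q : Yn d X Y f n q ->
  Y q /\ exists xt, Yn_witness d X Y f n q xt.
Proof.
  intros [w [[y0 [Yy0 [[_ Hfw0] [ys [xs [xt [Hys [Hcys [_ [_ [Hfib [Hcxs Hdist]]]]]]]]]]]] Hfw]].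
  assert (y0 = q) as -> by congruence.
  split; [exact Yy0 | exists xt, ys, xs; auto].
Qed.

Lemma witness_approached d X Y f n q xt P : Yn_witness d X Y f n q xt ->
  is_open P -> P xt ->
  exists ys, converges ys q /\
    exists N, forall k, (N <= k)%nat -> image f (fun w => X w /\ P w) (ys k).
Proof.
  intros [ys [xs [_ [Hcys [Hfib [Hcxs _]]]]]] HP Pxt.
  exists ys; split; [exact Hcys |].
  destruct (Hcxs P HP Pxt) as [N HN]; exists N; intros k Hk.
  exists (xs k); split; [split; [exact (proj1 (Hfib k)) | exact (HN k Hk)] | exact (proj2 (Hfib k))].
Qed.

Lemma witness_avoids_small_ball d X Y f n q xt z L : compatible d ->
  (0 < n)%nat -> Yn_witness d X Y f n q xt ->
  (forall w, agree L z w -> d z w < / (2 * INR n)) -> agree L z xt ->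
  forall a, fiber X f q a -> ~ agree L z a.
Proof.
  intros [[_ [_ [Hdsym Hdtri]]] _] Hn [ys [xs [_ [_ [_ [_ [s [Hs Hsa]]]]]]]] HL Hxt a Ha Haz.
  assert (Hnpos : 0 < INR n) by (apply lt_0_INR; exact Hn).
  assert (Hhalf : 2 * / (2 * INR n) = / INR n) by (field; lra).
  pose proof (Hsa a Ha); pose proof (HL a Haz); pose proof (HL xt Hxt).
  pose proof (Hdtri xt z a); rewrite (Hdsym xt z) in *; lra.
Qed.

Section LocalOpenness.

Variables (d : Cantor -> Cantor -> R) (X Y : cset) (f : Cantor -> Cantor) (n : nat).
Hypothesis Hd : compatible d.
Hypothesis Hclp : clopen_LC X Y f.
Hypothesis Hn : (1 <= n)%nat.

Lemma open_at_cylinders x m0 : X x ->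
  exists L, forall y', clY Y (Yn d X Y f n) y' -> agree L (f x) y' ->
    image f (fun w => X w /\ agree m0 x w) y'.
Proof.
  intros Xx.
  set (V := fun w => X w /\ agree m0 x w).
  assert (HVx : image f V (f x)).
  { exists x; split; [split; [exact Xx | apply agree_refl] | reflexivity]. }
  apply NNPP; intro Hno.
  assert (Hesc : forall L, exists q, Yn d X Y f n q /\ agree L (f x) q /\ ~ image f V q).
  { apply (escape_into_subset Y); [apply clopen_image_LC; [exact Hclp | apply cylinder_clopen] | exact HVx |].
    intro L; apply NNPP; intro Hnone; apply Hno; exists L; intros y' Ey' Hy'.
    apply NNPP; intro nVy'; apply Hnone; exists y'; auto. }
  assert (Hpick : forall L, exists qx : Cantor * Cantor,
    Y (fst qx) /\ agree L (f x) (fst qx) /\ ~ image f V (fst qx) /\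
    Yn_witness d X Y f n (fst qx) (snd qx)).
  { intro L; destruct (Hesc L) as [q [Hq [Hxq nVq]]].
    destruct (Yn_witness_of _ _ _ _ _ _ Hq) as [Yq [xt Hxt]].
    exists (q, xt); auto. }
  destruct (choice _ Hpick) as [qx Hqx].
  destruct (cantor_cluster_point (fun L => snd (qx L))) as [z Hz].
  assert (Hr : 0 < / (2 * INR n)) by (apply Rinv_0_lt_compat; apply lt_0_INR in Hn; lra).
  destruct (ball_contains_cylinder d z _ Hd Hr) as [L1 HL1].
  set (P := fun w => agree m0 x w \/ agree L1 z w).
  assert (HP : clopen P) by (apply clopen_union; apply cylinder_clopen).
  destruct (LC_limit_closed Y (image f (fun w => X w /\ P w)) (f x)) as [L2 HL2].
  { apply clopen_image_LC; [exact Hclp | exact HP]. }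
  { exists x; split; [split; [exact Xx | left; apply agree_refl] | reflexivity]. }
  destruct (Hz L1 L2) as [m [Hm Hzm]]; simpl in Hzm.
  destruct (Hqx m) as [Yq [Hxq [nVq Hwit]]].
  destruct (witness_approached _ _ _ _ _ _ _ P Hwit (proj1 HP) (or_intror Hzm))
    as [ys [Hys Hev]].
  destruct (HL2 _ ys Yq (agree_le _ _ _ _ Hm Hxq) Hys Hev) as [a [[Xa [Hax | Haz]] Hfa]].
  - apply nVq; exists a; split; [split |]; assumption.
  - exact (witness_avoids_small_ball _ _ _ _ _ _ _ _ _ Hd Hn Hwit HL1 Hzm a (conj Xa Hfa) Haz).
Qed.

End LocalOpenness.

Theorem lemma3 (d : Cantor -> Cantor -> R) (Hd : compatible d)
  (X Y : cset) (f : Cantor -> Cantor)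
  (Hmap : forall x, X x -> Y (f x))
  (Honto : forall y, Y y -> exists x, X x /\ f x = y)
  (Hcont : continuous_on X f) (Hclp : clopen_LC X Y f)
  (Hcpt : forall y, Y y -> cantor_compact (fiber X f y))
  (n : nat) (Hn : (1 <= n)%nat) :
  open_map_on (preimage_in X f (clY Y (Yn d X Y f n)))
              (clY Y (Yn d X Y f n)) f.
Proof.
  intros U [HUD [W [HW HUW]]].
  apply rel_open_of_local.
  - intros y [x [Ux <-]]; exact (proj2 (HUD x Ux)).
  - intros y [x [Ux <-]].
    destruct (proj1 (HUW x) Ux) as [[Xx _] Wx].
    destruct (HW x Wx) as [m0 Hm0].
    destruct (open_at_cylinders d X Y f n Hd Hclp Hn x m0 Xx) as [L HL].
    exists L; intros y' Ey' Hxy'.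
    destruct (HL y' Ey' Hxy') as [w [[Xw Hxw] <-]].
    exists w; split; [apply HUW; split; [split; assumption | exact (Hm0 w Hxw)] | reflexivity].
Qed.
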